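(* If $(f_m)$ is a Riesz sequence in $\mathcal{L}^2(I)$, then $(f_m*_T0)$ is also a Riesz sequence in $\mathcal{L}^2(I)$.
   Context: Let $N\ge 2$, $I=[x_0,x_N]$, $\Delta: x_0<\dots<x_N$ a partition, $L_n(x)=a_nx+b_n$ affine with $L_n(x_0)=x_{n-1}$, $L_n(x_N)=x_n$, $I_1=[x_0,x_1]$, $I_n=(x_{n-1},x_n]$ for $n\ge2$, and $\alpha=(\alpha_1,\dots,\alpha_N)\in(\mathcal{L}^\infty(I))^N$ with $\Lambda:=\operatorname{ess\,sup}\{|\alpha_n(x)|:x\in I,n=1,\dots,N\}<1$. For $f,b\in\mathcal{L}^2(I)$, $f*_Tb$ is the unique fixed point in $\mathcal{L}^2(I)$ of the contraction $Tg(x):=f(x)+\alpha_n(L_n^{-1}(x))(g-b)(L_n^{-1}(x))$, $x\in I_n$; $0$ is the null function. *)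

From HB Require Import structures.
From mathcomp Require Import all_boot all_order all_algebra.
From mathcomp Require Import all_classical all_reals all_analysis.
Set Implicit Arguments. Unset Strict Implicit. Unset Printing Implicit Defensive.
Import Order.TTheory GRing.Theory Num.Theory.
Local Open Scope classical_set_scope.
Local Open Scope ring_scope.

Section FracConv.
Variable R : realType.
Let mu := (@lebesgue_measure R).

Definition Iint (x : nat -> R) (N : nat) : set R := [set` `[x 0%N, x N]].

Definition Icell (x : nat -> R) (n : nat) : set R :=
  if n == 1%N then [set` `[x 0%N, x 1%N]] else [set` `]x n.-1, x n]].

(* L_n(t) = a_n t + b_n, the unique affine map with L_n(x_0) = x_{n-1},
   L_n(x_N) = x_n, and its inverse. *)
Definition Lmap (x : nat -> R) (N n : nat) (t : R) : R :=
  x n.-1 + (x n - x n.-1) / (x N - x 0%N) * (t - x 0%N).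
Definition Linv (x : nat -> R) (N n : nat) (t : R) : R :=
  x 0%N + (x N - x 0%N) / (x n - x n.-1) * (t - x n.-1).

Definition inL2 (x : nat -> R) (N : nat) (g : R -> R) : Prop :=
  measurable_fun (Iint x N) g /\
  (\int[mu]_(t in Iint x N) ((g t) ^+ 2)%:E < +oo)%E.

Definition frac_partition (x : nat -> R) (N : nat) : Prop :=
  (2 <= N)%N /\ forall i, (i < N)%N -> x i < x i.+1.

Definition scale_ok (x : nat -> R) (N : nat) (alpha : nat -> R -> R) : Prop :=
  (forall n, (1 <= n <= N)%N -> measurable_fun (Iint x N) (alpha n)) /\
  exists Lam : R, Lam < 1 /\
    forall n, (1 <= n <= N)%N ->
      {ae mu, forall t, Iint x N t -> `|alpha n t| <= Lam}.

Definition Top (x : nat -> R) (N : nat) (alpha : nat -> R -> R)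
  (f b g : R -> R) (t : R) : R :=
  f t + \sum_(1 <= n < N.+1)
    (\1_(Icell x n) t *
      (alpha n (Linv x N n t) * (g (Linv x N n t) - b (Linv x N n t)))).

(* g is (a representative of) f *_T b: the fixed point of T in L^2(I),
   equality meaning equality a.e. on I. *)
Definition is_frac_conv (x : nat -> R) (N : nat) (alpha : nat -> R -> R)
  (f b g : R -> R) : Prop :=
  inL2 x N g /\
  {ae mu, forall t, Iint x N t -> g t = Top x N alpha f b g t}.

Definition riesz_seq (x : nat -> R) (N : nat) (u : nat -> R -> R) : Prop :=
  (forall m, inL2 x N (u m)) /\
  exists A B : R, 0 < A /\ 0 < B /\
    forall (n : nat) (c : nat -> R),
      ((A * \sum_(k < n) (c k) ^+ 2)%:E
        <= \int[mu]_(t in Iint x N) ((\sum_(k < n) c k * u k t) ^+ 2)%:E)%E /\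
      (\int[mu]_(t in Iint x N) ((\sum_(k < n) c k * u k t) ^+ 2)%:E
        <= (B * \sum_(k < n) (c k) ^+ 2)%:E)%E.

End FracConv.

(* With b = 0 the operator reads T g = f + M g, where M g = (alpha_n g) o L_n^-1
   on I_n.  Substituting t = L_n s on each cell gives
   |M g|^2 <= sum_n a_n Lam^2 |g|^2 = Lam^2 |g|^2, because the slopes
   a_n = (x_n - x_(n-1)) / (x_N - x_0) of the maps L_n add up to 1.  By linearity a
   finite combination g = sum_k c_k (f_k *_T 0) solves g = F + M g with
   F = sum_k c_k f_k, so (1 - Lam) |g| <= |F| <= (1 + Lam) |g|, and the Riesz bounds
   A, B of (f_m) turn into A / (1 + Lam)^2 and B / (1 - Lam)^2.  Square roots are
   avoided by working with (a + b)^2 <= (1 + e) a^2 + (1 + 1/e) b^2 throughout. *)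

From mathcomp Require Import all_boot all_order all_algebra.
From mathcomp Require Import all_classical all_reals all_analysis.
From mathcomp Require Import ring lra measurable_realfun.
Set Implicit Arguments. Unset Strict Implicit. Unset Printing Implicit Defensive.
Import Order.TTheory GRing.Theory Num.Theory numFieldNormedType.Exports.
Local Open Scope classical_set_scope.
Local Open Scope ring_scope.

(* The library's [Filter] hint for [almost_everywhere] does not fire on the bare
   Lebesgue measure, which [near=>] needs below. *)
#[local] Instance lebesgue_ae_filter (R : realType) :
  Filter (nbhs (almost_everywhere (@lebesgue_measure R))) :=
  ae_filter_ringOfSetsType _.

Section affine_change_of_variables.
Variable R : realType.
Local Notation mu := (@lebesgue_measure R).

Definition affine (p k t : R) : R := p + k * t.

Lemma measurable_affine (p k : R) :
  measurable_fun [set: measurableTypeR R]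
    (affine p k : measurableTypeR R -> measurableTypeR R).
Proof. by apply: measurable_funD => //; exact: measurable_funM. Qed.

(* [pushforward mu f] is a measure only through an instance taking the
   measurability of [f] as an argument, so it is packed explicitly. *)
Let affine_pushforward (p k : R) : {measure set (measurableTypeR R) -> \bar R} :=
  measure_function_pushforward__canonical__measure_function_Measure mu
    (measurable_affine p k).

Lemma lebesgue_measure_affine_preimage (p k : R) (A : set R) : 0 < k ->
  measurable A -> mu (affine p k @^-1` A) = ((k^-1)%:E * mu A)%E.
Proof.
move=> k0 mA; have k_ge0 : 0 <= k by exact: ltW.
suff -> : mu A = mscale (NngNum k_ge0) (affine_pushforward p k) A.
  by rewrite /= muleA -EFinM mulVf ?gt_eqF // mul1e.
apply: lebesgue_measure_unique mA => _ [[a b]] _ <-.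
change (mu `]a, b] = k%:E * mu (affine p k @^-1` `]a, b]))%E.
have -> : affine p k @^-1` `]a, b]%classic = `](a - p) / k, (b - p) / k]%classic.
  apply/seteqP; split => t /=; rewrite !in_itv /= /affine;
  by rewrite ltr_pdivrMr // ler_pdivlMr // mulrC => /andP[? ?]; apply/andP; split; lra.
rewrite /= !lebesgue_measure_itv /= !lte_fin ltr_pM2r ?invr_gt0 // ltrD2r.
case: ifP => _; last by rewrite mule0.
by rewrite -EFinD -EFinM; congr EFin; field; rewrite gt_eqF.
Qed.

Lemma ge0_integral_affine (p k : R) (D : set R) (phi : R -> \bar R) : 0 < k ->
  measurable D -> measurable_fun D phi -> (forall s, D s -> (0 <= phi s)%E) ->
  (\int[mu]_(t in affine p k @^-1` D) phi (affine p k t) =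
   (k^-1)%:E * \int[mu]_(s in D) phi s)%E.
Proof.
move=> k0 mD mphi phi0.
rewrite -(ge0_integral_pushforward (measurable_affine p k)) //; last first.
  by move=> s /set_mem; exact: phi0.
have k1_ge0 : 0 <= k^-1 by rewrite invr_ge0 ltW.
rewrite -(ge0_integral_mscale mu mD (NngNum k1_ge0)) //.
apply: eq_measure_integral => [|mf A mA _]; first exact: measurable_affine.
exact: lebesgue_measure_affine_preimage.
Qed.

Lemma ge0_integral_affine_le (p k : R) (A D : set R) (phi : R -> \bar R) :
  0 < k -> measurable A -> measurable D -> affine p k @` A `<=` D ->
  measurable_fun D phi -> (forall s, D s -> (0 <= phi s)%E) ->
  (\int[mu]_(t in A) phi (affine p k t) <= (k^-1)%:E * \int[mu]_(s in D) phi s)%E.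
Proof.
move=> k0 mA mD AD mphi phi0; rewrite -(ge0_integral_affine p) //.
have mpre : measurable (affine p k @^-1` D).
  by rewrite -[X in measurable X]setTI; exact: measurable_affine.
apply: ge0_subset_integral => //.
- apply: measurable_comp mphi (measurable_funS _ _ (measurable_affine p k)) => //.
  by move=> _ [t Dt <-].
- by move=> t; exact: phi0.
- by move=> t At; apply: AD; exists t.
Qed.
End affine_change_of_variables.

Lemma sqrD_le_weighted (R : realFieldType) (e a b : R) : 0 < e ->
  (a + b) ^+ 2 <= (1 + e) * a ^+ 2 + (1 + e^-1) * b ^+ 2.
Proof.
move=> e0; rewrite -subr_ge0.
have -> : (1 + e) * a ^+ 2 + (1 + e^-1) * b ^+ 2 - (a + b) ^+ 2 =
          e^-1 * (e * a - b) ^+ 2 by field; rewrite gt_eqF.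
by rewrite mulr_ge0 ?invr_ge0 ?sqr_ge0 // ltW.
Qed.

Lemma perturb_bounds (R : realFieldType) (lam a b X Y Z : R) :
  0 < lam < 1 -> Z <= lam ^+ 2 * X ->
  X <= (1 - lam)^-1 * Y + lam^-1 * Z ->
  Y <= (1 + lam) * X + (1 + lam^-1) * Z ->
  a <= Y <= b -> a / (1 + lam) ^+ 2 <= X <= b / (1 - lam) ^+ 2.
Proof.
move=> /andP[lam0 lam1] ZX XYZ YXZ /andP[aY Yb].
have lam1' : 0 < 1 - lam by rewrite subr_gt0.
have lamV_ge0 : 0 <= lam^-1 by rewrite invr_ge0 ltW.
apply/andP; split.
- have hZ : (1 + lam^-1) * Z <= (lam + lam ^+ 2) * X.
    have -> : lam + lam ^+ 2 = (1 + lam^-1) * lam ^+ 2 by field; rewrite lt0r_neq0.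
    by rewrite -mulrA ler_wpM2l // addr_ge0.
  rewrite ler_pdivrMr ?exprn_gt0 ?addr_gt0 //; nra.
- have hZ : lam^-1 * Z <= lam * X.
    by apply: le_trans (ler_wpM2l lamV_ge0 ZX) _; rewrite expr2 -mulrA mulKf ?lt0r_neq0.
  have hX : (1 - lam) * X <= (1 - lam)^-1 * Y by lra.
  have := ler_wpM2l (ltW lam1') hX; rewrite mulVKf ?lt0r_neq0 // mulrA -expr2.
  by move=> h; rewrite ler_pdivlMr ?exprn_gt0 // mulrC (le_trans h Yb).
Qed.

Section square_integrals.
Variable R : realType.
Local Notation mu := (@lebesgue_measure R).
Variables (D : set R) (mD : measurable D).

Lemma ge0_integral_sqrD_le (u v : R -> R) (e : R) :
  measurable_fun D u -> measurable_fun D v -> 0 < e ->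
  (\int[mu]_(t in D) ((u t + v t) ^+ 2)%:E <=
   (1 + e)%:E * \int[mu]_(t in D) ((u t) ^+ 2)%:E +
   (1 + e^-1)%:E * \int[mu]_(t in D) ((v t) ^+ 2)%:E)%E.
Proof.
move=> mu_ mv e0.
have msqr (w : R -> R) : measurable_fun D w -> measurable_fun D (fun t => ((w t) ^+ 2)%:E).
  by move=> mw; apply/measurable_EFinP; exact: measurable_funX.
have msqrZ c (w : R -> R) : measurable_fun D w ->
    measurable_fun D (fun t => c%:E * ((w t) ^+ 2)%:E)%E.
  by move=> mw; apply: emeasurable_funM; [exact: measurable_cst | exact: msqr].
have sqrZ_ge0 c (w : R -> R) t : 0 <= c -> (0 <= c%:E * ((w t) ^+ 2)%:E)%E.
  by move=> c0; rewrite -EFinM lee_fin mulr_ge0 ?sqr_ge0.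
have e1_ge0 : 0 <= 1 + e by rewrite addr_ge0 // ltW.
have e2_ge0 : 0 <= 1 + e^-1 by rewrite addr_ge0 // invr_ge0 ltW.
apply: (@le_trans _ _ (\int[mu]_(t in D)
    ((1 + e)%:E * ((u t) ^+ 2)%:E + (1 + e^-1)%:E * ((v t) ^+ 2)%:E))%E).
  apply: ge0_le_integral.
  - exact: mD.
  - by move=> t _; rewrite lee_fin sqr_ge0.
  - by apply: msqr; exact: measurable_funD.
  - by apply: emeasurable_funD; exact: msqrZ.
  - by move=> t _; rewrite -!EFinM -EFinD lee_fin; exact: sqrD_le_weighted.
rewrite ge0_integralD ?ge0_integralZl //; try exact: msqrZ; try exact: msqr.
all: by move=> t _; rewrite ?sqrZ_ge0 // lee_fin sqr_ge0.
Qed.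

Lemma measurable_lincomb (u : nat -> R -> R) (c : nat -> R) (n : nat) :
  (forall k, measurable_fun D (u k)) ->
  measurable_fun D (fun t => \sum_(k < n) c k * u k t).
Proof.
move=> mu_; apply: measurable_sum => k.
by apply: measurable_funM => //; exact: measurable_cst.
Qed.

Lemma sqr_integral_lincomb_lty (u : nat -> R -> R) (c : nat -> R) (n : nat) :
  (forall k, measurable_fun D (u k)) ->
  (forall k, \int[mu]_(t in D) ((u k t) ^+ 2)%:E < +oo)%E ->
  (\int[mu]_(t in D) ((\sum_(k < n) c k * u k t) ^+ 2)%:E < +oo)%E.
Proof.
move=> mu_ u_fin; elim: n => [|n IHn].
  by under eq_integral do rewrite big_ord0 expr0n /=; rewrite integral0.
under eq_integral do rewrite big_ord_recr /=.
apply: le_lt_trans (ge0_integral_sqrD_le _ _ ltr01) _.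
- exact: measurable_lincomb.
- by apply: measurable_funM => //; exact: measurable_cst.
under [X in (_ + _ * X)%E]eq_integral do rewrite exprMn EFinM.
rewrite ge0_integralZl ?lee_fin ?sqr_ge0 //; last 2 first.
- by apply/measurable_EFinP; exact: measurable_funX (mu_ n).
- by move=> t _; rewrite lee_fin sqr_ge0.
by rewrite lte_add_pinfty // !lte_mul_pinfty ?lee_fin ?addr_ge0 ?invr_ge0 ?sqr_ge0.
Qed.

Lemma sqr_integral_mul_le (a g : R -> R) (lam : R) :
  measurable_fun D a -> measurable_fun D g ->
  {ae mu, forall t, D t -> `|a t| <= lam} ->
  (\int[mu]_(t in D) ((a t * g t) ^+ 2)%:E <=
   (lam ^+ 2)%:E * \int[mu]_(t in D) ((g t) ^+ 2)%:E)%E.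
Proof.
move=> ma mg a_le.
have mg2 : measurable_fun D (fun t => ((g t) ^+ 2)%:E).
  by apply/measurable_EFinP; exact: measurable_funX.
rewrite -ge0_integralZl ?lee_fin ?sqr_ge0 //; last by move=> t _; rewrite lee_fin sqr_ge0.
apply: ae_ge0_le_integral => //.
- by move=> t _; rewrite lee_fin sqr_ge0.
- by apply/measurable_EFinP; apply: measurable_funX; exact: measurable_funM.
- by move=> t _; rewrite -EFinM lee_fin mulr_ge0 ?sqr_ge0.
- by apply: emeasurable_funM => //; exact: measurable_cst.
near=> t => Dt; rewrite -EFinM lee_fin exprMn ler_wpM2r ?sqr_ge0 //.
have /andP[? ?] : - lam <= a t <= lam by rewrite -ler_norml; apply: (near a_le t).
nra.
Unshelve. all: by end_near. Qed.

Lemma sqr_integral_fin (h : R -> R) :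
  (\int[mu]_(t in D) ((h t) ^+ 2)%:E < +oo)%E ->
  exists X : R, (\int[mu]_(t in D) ((h t) ^+ 2)%:E = X%:E)%E.
Proof.
have : (0 <= \int[mu]_(t in D) ((h t) ^+ 2)%:E)%E.
  by apply: integral_ge0 => t _; rewrite lee_fin sqr_ge0.
by case: (\int[mu]_(t in D) _)%E => // X _ _; exists X.
Qed.

Lemma sqr_integral_bounds_perturb (g F P : R -> R) (lam a b : R) :
  0 < lam < 1 ->
  measurable_fun D g -> measurable_fun D F -> measurable_fun D P ->
  (\int[mu]_(t in D) ((g t) ^+ 2)%:E < +oo)%E ->
  (\int[mu]_(t in D) ((P t) ^+ 2)%:E <=
     (lam ^+ 2)%:E * \int[mu]_(t in D) ((g t) ^+ 2)%:E)%E ->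
  {ae mu, forall t, D t -> g t = F t + P t} ->
  (a%:E <= \int[mu]_(t in D) ((F t) ^+ 2)%:E)%E ->
  (\int[mu]_(t in D) ((F t) ^+ 2)%:E <= b%:E)%E ->
  ((a / (1 + lam) ^+ 2)%:E <= \int[mu]_(t in D) ((g t) ^+ 2)%:E)%E /\
  (\int[mu]_(t in D) ((g t) ^+ 2)%:E <= (b / (1 - lam) ^+ 2)%:E)%E.
Proof.
move=> lam01 mg mF mP /sqr_integral_fin[X gX] Pg gFP aF Fb.
have /andP[lam0 lam1] := lam01.
rewrite gX in Pg *.
have [Z PZ] := sqr_integral_fin (le_lt_trans Pg (ltry _)).
have [Y FY] := sqr_integral_fin (le_lt_trans Fb (ltry _)).
rewrite PZ lee_fin in Pg; rewrite FY lee_fin in aF Fb.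
have msqr (w : R -> R) : measurable_fun D w -> measurable_fun D (fun t => ((w t) ^+ 2)%:E).
  by move=> mw; apply/measurable_EFinP; exact: measurable_funX.
have mNP : measurable_fun D (fun t => - P t) by exact: measurableT_comp.
have gFP2 : (\int[mu]_(t in D) ((g t) ^+ 2)%:E =
    \int[mu]_(t in D) ((F t + P t) ^+ 2)%:E)%E.
  apply: ae_eq_integral => //; [exact: msqr | apply: msqr; exact: measurable_funD |].
  by near=> t => Dt; rewrite (near gFP t).
have FgP2 : (\int[mu]_(t in D) ((F t) ^+ 2)%:E =
    \int[mu]_(t in D) ((g t + - P t) ^+ 2)%:E)%E.
  apply: ae_eq_integral => //; [exact: msqr | apply: msqr; exact: measurable_funD |].
  by near=> t => Dt; rewrite (near gFP t) ?addrK.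
have lam1' : 0 < 1 - lam by rewrite subr_gt0.
(* The weights [1 + e] and [1 + e^-1] are [(1 - lam)^-1] and [lam^-1] for
   [e = lam / (1 - lam)], and [1 + lam] and [1 + lam^-1] for [e = lam]. *)
have e0 : 0 < lam / (1 - lam) by rewrite divr_gt0.
have := ge0_integral_sqrD_le mF mP e0.
rewrite -gFP2 gX FY PZ -!EFinM -EFinD lee_fin => hX.
have := ge0_integral_sqrD_le mg mNP lam0.
under [X in (_ <= _ + _ * X)%E]eq_integral do rewrite sqrrN.
rewrite -FgP2 gX FY PZ -!EFinM -EFinD lee_fin => hY.
have e1 : 1 + lam / (1 - lam) = (1 - lam)^-1 by field; rewrite lt0r_neq0.
have e2 : 1 + (lam / (1 - lam))^-1 = lam^-1 by field; rewrite !lt0r_neq0.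
rewrite e1 e2 in hX.
rewrite !lee_fin; apply/andP; apply: (perturb_bounds lam01 Pg hX hY).
by rewrite aF.
Unshelve. all: by end_near. Qed.
End square_integrals.

Section partition.
Variables (R : realType) (x : nat -> R) (N : nat).
Hypothesis N_gt0 : (0 < N)%N.
Hypothesis x_incr : forall i, (i < N)%N -> x i < x i.+1.
Local Notation mu := (@lebesgue_measure R).
Local Notation I := (Iint x N).

Lemma x_le i j : (i <= j <= N)%N -> x i <= x j.
Proof.
move=> /andP[ij jN].
have mono := @homo_leq_in _ [pred k | (k <= N)%N] x (fun a b => a <= b)
  (@lexx _ _) (fun b a c => @le_trans _ _ b a c).
apply: mono => //; rewrite ?inE ?(leq_trans ij) //.
- by move=> k l _ lN m /andP[_ /ltnW /leq_trans]; apply.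
- by move=> k _ kN; exact/ltW/x_incr.
Qed.

Lemma x0_lt_xN : x 0 < x N.
Proof. by apply: lt_le_trans (x_incr N_gt0) (x_le _); rewrite N_gt0 /=. Qed.

Definition slope n := (x n - x n.-1) / (x N - x 0).

Lemma slope_gt0 n : (0 < n <= N)%N -> 0 < slope n.
Proof.
case: n => // n /andP[_ nN]; rewrite divr_gt0 // subr_gt0 ?x0_lt_xN //.
exact: x_incr.
Qed.

Lemma sum_slope : \sum_(i < N) slope i.+1 = 1.
Proof.
rewrite -mulr_suml -(big_mkord xpredT (fun i => x i.+1 - x i)).
by rewrite telescope_sumr // mulfV // lt0r_neq0 // subr_gt0 x0_lt_xN.
Qed.

Lemma Linv_affine n :
  Linv x N n = affine (x 0 - (slope n)^-1 * x n.-1) (slope n)^-1.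
Proof. by apply/funext => t; rewrite /Linv /affine /slope invf_div; ring. Qed.

Lemma Icell_itv n t : Icell x n t -> x n.-1 <= t <= x n.
Proof.
rewrite /Icell; case: ifP => [/eqP -> | _] /=; rewrite in_itv //=.
by move=> /andP[tl tr]; rewrite (ltW tl) tr.
Qed.

Lemma Icell_sub n : (0 < n <= N)%N -> Icell x n `<=` I.
Proof.
case: n => // n /andP[_ nN] t /Icell_itv /andP[lt tr].
rewrite /Iint /= in_itv /= (le_trans _ lt) ?(le_trans tr) ?x_le ?nN //=.
by rewrite (ltnW nN).
Qed.

Lemma Linv_Icell_sub n : (0 < n <= N)%N -> Linv x N n @` Icell x n `<=` I.
Proof.
case: n => // n /andP[_ nN] _ [t /Icell_itv /andP[lt tr] <-] /=.
have xn := x_incr nN; have x0N := x0_lt_xN.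
rewrite /Iint /= in_itv /= /Linv; apply/andP; split.
  by rewrite lerDl mulr_ge0 ?subr_ge0 // divr_ge0 // subr_ge0 ltW.
rewrite -lerBrDl /= mulrAC ler_pdivrMr ?subr_gt0 //.
by rewrite ler_wpM2l ?subr_ge0 ?(ltW x0N) // lerD2r.
Qed.

Lemma Icell_disjoint (i j : 'I_N) t :
  Icell x i.+1 t -> Icell x j.+1 t -> i = j.
Proof.
wlog ij : i j / (i <= j)%N.
  by move=> wl ti tj; case: (leqP i j) => [/wl|/ltnW /wl]; [exact | move=> /(_ tj ti)].
move=> /Icell_itv /andP[_ ti].
case: (ltngtP i j) ij => // [ij _ | /val_inj //].
have j1 : (j.+1 == 1)%N = false by case: (nat_of_ord j) ij.
rewrite /Icell j1 /= in_itv /= => /andP[tj _].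
have xij : x i.+1 <= x j by apply: x_le; rewrite ij ltnW.
by have := lt_le_trans tj (le_trans ti xij); rewrite ltxx.
Qed.

Lemma sqr_sum_Icell (v : 'I_N -> R) t :
  (\sum_(i < N) \1_(Icell x i.+1) t * v i) ^+ 2 =
  \sum_(i < N) \1_(Icell x i.+1) t * (v i) ^+ 2.
Proof.
have [[i ti]|none] := pselect (exists i : 'I_N, Icell x i.+1 t); last first.
  have out (j : 'I_N) : \1_(Icell x j.+1) t = 0 :> R.
    by rewrite indicE memNset // => tj; apply: none; exists j.
  by rewrite !big1 ?expr0n // => j _; rewrite out mul0r.
have out (j : 'I_N) : j != i -> \1_(Icell x j.+1) t = 0 :> R.
  move=> ji; rewrite indicE memNset // => tj.
  by move/eqP: ji; apply; exact: Icell_disjoint tj ti.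
rewrite (bigD1 i) //= [RHS](bigD1 i) //= !big1 ?addr0 => [|j /out->|j /out->];
  rewrite ?mul0r //.
by rewrite indicE mem_set // !mul1r.
Qed.

Lemma measurable_Icell n : measurable (Icell x n).
Proof. by rewrite /Icell; case: ifP => _; exact: measurable_itv. Qed.

Lemma measurable_Iint : measurable I.
Proof. exact: measurable_itv. Qed.

Lemma measurable_Icell_pullback n (psi : R -> R) : (0 < n <= N)%N ->
  measurable_fun I psi ->
  measurable_fun I (fun t => \1_(Icell x n) t * psi (Linv x N n t)).
Proof.
move=> nN mpsi.
have -> : (fun t => \1_(Icell x n) t * psi (Linv x N n t)) =
    (psi \o Linv x N n : R -> R) \_ (Icell x n).
  by apply/funext => t; rewrite patchE indicE; case: (_ \in _); rewrite ?mul1r ?mul0r.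
apply: (measurable_funS measurableT) => //.
apply/(measurable_restrictT _ (measurable_Icell n)).
apply: measurable_comp measurable_Iint (Linv_Icell_sub nN) mpsi _.
by rewrite Linv_affine; exact: measurable_funS (measurable_affine _ _).
Qed.

Lemma integral_Icell_pullback_le n (phi : R -> R) : (0 < n <= N)%N ->
  measurable_fun I phi -> (forall s, I s -> 0 <= phi s) ->
  (\int[mu]_(t in I) (\1_(Icell x n) t * phi (Linv x N n t))%:E <=
   (slope n)%:E * \int[mu]_(s in I) (phi s)%:E)%E.
Proof.
move=> nN mphi phi0.
have -> : (\int[mu]_(t in I) (\1_(Icell x n) t * phi (Linv x N n t))%:E =
    \int[mu]_(t in Icell x n) (phi (Linv x N n t))%:E)%E.
  rewrite integral_mkcond [RHS]integral_mkcond.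
  apply: eq_integral => t _; rewrite !patchE indicE.
  have [tC|tC] := boolP (t \in Icell x n); last by rewrite mul0r; case: ifP.
  have tI : t \in I by apply/mem_set/(Icell_sub nN); exact: set_mem tC.
  by rewrite tI mul1r.
have := @ge0_integral_affine_le R (x 0 - (slope n)^-1 * x n.-1) (slope n)^-1
  (Icell x n) I (fun s => (phi s)%:E).
rewrite invrK -Linv_affine; apply.
- by rewrite invr_gt0 slope_gt0.
- exact: measurable_Icell.
- exact: measurable_Iint.
- exact: Linv_Icell_sub.
- exact/measurable_EFinP.
- by move=> s Is; rewrite lee_fin phi0.
Qed.
End partition.

Section linear_part.
Variables (R : realType) (x : nat -> R) (N : nat) (alpha : nat -> R -> R).
Hypothesis N_gt0 : (0 < N)%N.
Hypothesis x_incr : forall i, (i < N)%N -> x i < x i.+1.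
Hypothesis alpha_meas :
  forall n, (0 < n <= N)%N -> measurable_fun (Iint x N) (alpha n).
Local Notation mu := (@lebesgue_measure R).
Local Notation I := (Iint x N).

Definition Tlin (g : R -> R) (t : R) : R :=
  \sum_(i < N) \1_(Icell x i.+1) t *
    (alpha i.+1 (Linv x N i.+1 t) * g (Linv x N i.+1 t)).

Lemma Top0E (f g : R -> R) t : Top x N alpha f (fun=> 0) g t = f t + Tlin g t.
Proof.
rewrite /Top big_add1 big_mkord; congr (_ + _).
by apply: eq_bigr => i _; rewrite subr0.
Qed.

Lemma Tlin_lincomb (h : nat -> R -> R) (c : nat -> R) n t :
  Tlin (fun s => \sum_(k < n) c k * h k s) t = \sum_(k < n) c k * Tlin (h k) t.
Proof.
under [RHS]eq_bigr do rewrite mulr_sumr.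
rewrite exchange_big /=; apply: eq_bigr => i _.
rewrite !mulr_sumr; apply: eq_bigr => k _; ring.
Qed.

Lemma is_frac_conv0_lincomb (f h : nat -> R -> R) (c : nat -> R) n :
  (forall m, is_frac_conv x N alpha (f m) (fun=> 0) (h m)) ->
  {ae mu, forall t, I t -> \sum_(k < n) c k * h k t =
    \sum_(k < n) c k * f k t + Tlin (fun s => \sum_(k < n) c k * h k s) t}.
Proof.
move=> h_conv; have h_fix := ae_foralln (fun k => (h_conv k).2).
near=> t => It; rewrite Tlin_lincomb -big_split /=; apply: eq_bigr => k _.
by rewrite (near h_fix t) // Top0E mulrDr.
Unshelve. all: by end_near. Qed.

Lemma measurable_Tlin g : measurable_fun I g -> measurable_fun I (Tlin g).
Proof.
move=> mg; apply: measurable_sum => i.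
apply: (measurable_Icell_pullback N_gt0 x_incr (psi := fun s => alpha i.+1 s * g s)).
  by rewrite ltn_ord.
by apply: measurable_funM => //; apply: alpha_meas; rewrite ltn_ord.
Qed.

Lemma Tlin_sqr_integral_le g (lam : R) : measurable_fun I g ->
  (forall n, (0 < n <= N)%N -> {ae mu, forall t, I t -> `|alpha n t| <= lam}) ->
  (\int[mu]_(t in I) ((Tlin g t) ^+ 2)%:E <=
   (lam ^+ 2)%:E * \int[mu]_(t in I) ((g t) ^+ 2)%:E)%E.
Proof.
move=> mg alpha_le.
have iN (i : 'I_N) : (0 < i.+1 <= N)%N by rewrite ltn_ord.
have mag (i : 'I_N) : measurable_fun I (fun s => (alpha i.+1 s * g s) ^+ 2).
  by apply: measurable_funX; apply: measurable_funM => //; exact: alpha_meas.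
under eq_integral do rewrite sqr_sum_Icell // -sumEFin.
rewrite ge0_integral_sum //; first last.
- by move=> i t _; rewrite lee_fin mulr_ge0 ?sqr_ge0.
- move=> i; apply/measurable_EFinP.
  exact: (measurable_Icell_pullback N_gt0 x_incr (iN i) (mag i)).
- exact: measurable_Iint.
apply: (@le_trans _ _ (\sum_(i < N) (slope x N i.+1)%:E *
    \int[mu]_(s in I) ((alpha i.+1 s * g s) ^+ 2)%:E)%E).
  apply: lee_sum => i _.
  by apply: (integral_Icell_pullback_le N_gt0 x_incr (iN i) (mag i)) => s _;
    exact: sqr_ge0.
apply: (@le_trans _ _ (\sum_(i < N) (slope x N i.+1)%:E *
    ((lam ^+ 2)%:E * \int[mu]_(t in I) ((g t) ^+ 2)%:E))%E).
  apply: lee_sum => i _; apply: lee_wpmul2l; first by rewrite lee_fin ltW ?slope_gt0.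
  exact: (sqr_integral_mul_le (measurable_Iint x N) (alpha_meas (iN i)) mg
    (alpha_le _ (iN i))).
set Y := ((lam ^+ 2)%:E * \int[mu]_(t in I) ((g t) ^+ 2)%:E)%E.
have -> : (\sum_(i < N) (slope x N i.+1)%:E * Y =
    (\sum_(i < N) slope x N i.+1)%:E * Y)%E.
  by rewrite -sumEFin ge0_sume_distrl // => i _; rewrite lee_fin ltW ?slope_gt0.
by rewrite (sum_slope N_gt0 x_incr) mul1e.
Qed.

End linear_part.

Lemma scale_ok_bound (R : realType) (x : nat -> R) (N : nat)
    (alpha : nat -> R -> R) :
  scale_ok x N alpha -> exists2 lam : R, 0 < lam < 1 &
    forall n, (0 < n <= N)%N ->
      {ae @lebesgue_measure R, forall t, Iint x N t -> `|alpha n t| <= lam}.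
Proof.
move=> [_ [lam0 [lam0_lt1 alpha_le0]]]; exists (Num.max lam0 2^-1).
  have [half0 half1] : 0 < 2^-1 :> R /\ 2^-1 < 1 :> R by split; lra.
  by rewrite lt_max gt_max lam0_lt1 half0 half1 orbT.
have lam0_le : lam0 <= Num.max lam0 2^-1 by rewrite le_max lexx.
move=> n nN; near=> t => It; apply: le_trans lam0_le.
exact: (near (alpha_le0 n nN) t).
Unshelve. all: by end_near. Qed.

Theorem theorem6p14 (R : realType) (N : nat) (x : nat -> R)
  (alpha : nat -> R -> R) (f : nat -> R -> R) (h : nat -> R -> R) :
  frac_partition x N ->
  scale_ok x N alpha ->
  riesz_seq x N f ->
  (forall m, is_frac_conv x N alpha (f m) (fun=> 0) (h m)) ->
  riesz_seq x N h.
Proof.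
move=> [N2 x_incr] alpha_ok [f_L2 [A [B [A0 [B0 f_riesz]]]]] h_conv.
have N_gt0 : (0 < N)%N by exact: leq_trans N2.
have [lam lam01 alpha_le] := scale_ok_bound alpha_ok.
have /andP[lam0 lam1] := lam01.
have mI := measurable_Iint x N.
have mh k : measurable_fun (Iint x N) (h k) by case: (h_conv k) => [[]].
have mf k : measurable_fun (Iint x N) (f k) by case: (f_L2 k).
split; first by move=> m; case: (h_conv m).
exists (A / (1 + lam) ^+ 2), (B / (1 - lam) ^+ 2).
split; first by rewrite divr_gt0 // exprn_gt0 // addr_gt0.
split; first by rewrite divr_gt0 // exprn_gt0 // subr_gt0.
move=> n c; have [FA FB] := f_riesz n c.
have mg := measurable_lincomb c n mh.
have := sqr_integral_bounds_perturb mI lam01 mg (measurable_lincomb c n mf)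
  (measurable_Tlin N_gt0 x_incr alpha_ok.1 mg)
  (sqr_integral_lincomb_lty mI c n mh (fun k => (h_conv k).1.2))
  (Tlin_sqr_integral_le N_gt0 x_incr alpha_ok.1 mg alpha_le)
  (is_frac_conv0_lincomb c n h_conv) FA FB.
by rewrite [A / _ * _]mulrAC [B / _ * _]mulrAC.
Qed.
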